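(* Let $\mathcal{B}$ be a natural correlation basis and $X,Y$ continuous random variables. If $X$ and $Y$ are comonotonic then $\rho^B_{jk}(X,Y)=\delta_{jk}$ for all $j,k\in\mathbb{N}$. If $X$ and $Y$ are countermonotonic then $\rho^B_{jk}(X,Y)=(-1)^j\delta_{jk}$ for all $j,k\in\mathbb{N}$.
   Context: A correlation basis is a complete orthonormal system $\{B_j:j\in\mathbb{N}_0\}$ of $\mathcal{L}^2([0,1])$ with $B_0\equiv1$. It is regular if each $B_j$, $j\ge1$, is (a) piecewise continuous and strictly monotonic (there is a finite partition of $[0,1]$ into intervals on whose interiors $B_j$ is continuous and strictly monotonic) and (b) regular (continuous on $[0,1]$, continuously differentiable on $(0,1)$ with bounded derivative, and $B_j'(u)=0$ iff $u$ is a turning point). It is natural if it is regular and for every $j\in\mathbb{N}$: (i) $B_j'(u)>0$ on some interval $(1-\epsilon_j,1)$, $\epsilon_j>0$; (ii) $B_j$ has exactly $j-1$ turning points; (iii) $B_j(1-u)=(-1)^jB_j(u)$ for all $u\in[0,1]$. The basis correlation is $\rho^B_{jk}(X,Y)=\rho(B_j(F_X(X)),B_k(F_Y(Y)))$ with $\rho$ Pearson correlation; $\delta_{jk}$ is the Kronecker delta. *)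

From HB Require Import structures.
From mathcomp Require Import all_boot all_order all_algebra.
From mathcomp Require Import all_classical all_reals all_analysis.
Set Implicit Arguments. Unset Strict Implicit. Unset Printing Implicit Defensive.
Import Order.TTheory GRing.Theory Num.Theory.
Import numFieldNormedType.Exports.
Local Open Scope classical_set_scope.
Local Open Scope ring_scope.

Section defs.
Variable R : realType.

Local Notation leb := (@lebesgue_measure R).
Local Notation I01 := (`[0%R, 1%R]%classic : set R).
Local Notation J01 := (`]0%R, 1%R[%classic : set R).

Definition L2_01 (f : R -> R) : Prop :=
  measurable_fun I01 f /\
  (\int[leb]_(x in I01) ((f x) ^+ 2)%:E < +oo)%E.

Definition inner01 (f g : R -> R) : R :=
  Rintegral leb I01 (fun x => f x * g x).

Definition correlation_basis (B : nat -> R -> R) : Prop :=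
  (forall j, L2_01 (B j)) /\
  (forall j k, inner01 (B j) (B k) = (j == k)%:R) /\
  (* completeness: only the (a.e.) zero function is orthogonal to all B_j *)
  (forall f, L2_01 f -> (forall j, inner01 f (B j) = 0) ->
     {ae leb, forall x, I01 x -> f x = 0}) /\
  (forall u, u \in `[0, 1] -> B 0%N u = 1).

Definition strictly_monotone_on (A : set R) (f : R -> R) : Prop :=
  {in A &, {homo f : x y / x < y}} \/ {in A &, {homo f : x y / y < x}}.

Definition turning_point (f : R -> R) (u : R) : Prop :=
  (u \in `]0, 1[) /\
  exists e : R, 0 < e /\
    (({in (`]u - e, u]) &, {homo f : x y / x < y}} /\
     {in (`[u, u + e[) &, {homo f : x y / y < x}}) \/
    ({in (`]u - e, u]) &, {homo f : x y / y < x}} /\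
     {in (`[u, u + e[) &, {homo f : x y / x < y}})).

Definition piecewise_cont_strict_mono (f : R -> R) : Prop :=
  exists (n : nat) (t : nat -> R),
    t 0%N = 0 /\ t n = 1 /\
    (forall i, (i < n)%N -> t i < t i.+1) /\
    (forall i, (i < n)%N ->
       {within `]t i, t i.+1[%classic, continuous f} /\
       strictly_monotone_on `]t i, t i.+1[%classic f).

Definition regular_fun (f : R -> R) : Prop :=
  {within I01, continuous f} /\
  (forall u, u \in `]0, 1[ -> derivable f u 1) /\
  {within J01, continuous (derive1 f)} /\
  (exists M : R, forall u, u \in `]0, 1[ -> `|derive1 f u| <= M) /\
  (forall u, u \in `]0, 1[ -> (derive1 f u = 0 <-> turning_point f u)).

Definition regular_basis (B : nat -> R -> R) : Prop :=
  correlation_basis B /\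
  forall j, (0 < j)%N -> piecewise_cont_strict_mono (B j) /\ regular_fun (B j).

Definition natural_basis (B : nat -> R -> R) : Prop :=
  regular_basis B /\
  forall j, (0 < j)%N ->
    (exists2 e : R, 0 < e & forall u, u \in `]1 - e, 1[ -> 0 < derive1 (B j) u) /\
    (exists s : seq R, uniq s /\ size s = j.-1 /\
       forall u, turning_point (B j) u <-> u \in s) /\
    (forall u, u \in `[0, 1] -> B j (1 - u) = (-1) ^+ j * B j u).

Context {d : measure_display} {T : measurableType d} (P : probability T R).

Definition F_ (X : {RV P >-> R}) (x : R) : R := fine (cdf X x).

Definition continuous_rv (X : {RV P >-> R}) : Prop := continuous (F_ X).

Definition comonotonic_set (A : set (R * R)) : Prop :=
  forall p q, A p -> A q ->
    (p.1 <= q.1 /\ p.2 <= q.2) \/ (q.1 <= p.1 /\ q.2 <= p.2).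

Definition countermonotonic_set (A : set (R * R)) : Prop :=
  forall p q, A p -> A q ->
    (p.1 <= q.1 /\ q.2 <= p.2) \/ (q.1 <= p.1 /\ p.2 <= q.2).

(* (X,Y) is comonotonic iff it has a comonotonic support, i.e. some
   comonotonic set A with P((X,Y) in A) = 1 (Dhaene et al.) *)
Definition comonotonic (X Y : {RV P >-> R}) : Prop :=
  exists A, comonotonic_set A /\ {ae P, forall w, A (X w, Y w)}.

Definition countermonotonic (X Y : {RV P >-> R}) : Prop :=
  exists A, countermonotonic_set A /\ {ae P, forall w, A (X w, Y w)}.

Definition pearson (U V : T -> R) : R :=
  fine (covariance P U V) / Num.sqrt (fine 'V_P[U] * fine 'V_P[V]).

Definition basis_corr (B : nat -> R -> R) (j k : nat) (X Y : {RV P >-> R}) : R :=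
  pearson (fun w => B j (F_ X (X w))) (fun w => B k (F_ Y (Y w))).

End defs.

From HB Require Import structures.
From mathcomp Require Import all_boot all_order all_algebra.
From mathcomp Require Import all_classical all_reals all_analysis.
From mathcomp Require Import lra.
Set Implicit Arguments. Unset Strict Implicit. Unset Printing Implicit Defensive.
Import Order.TTheory GRing.Theory Num.Theory Num.Def.
Import numFieldNormedType.Exports.
Local Open Scope classical_set_scope.
Local Open Scope ring_scope.

(* For a continuous random variable X, U := F_X(X) is uniform on [0, 1]: its
   law and Lebesgue measure on [0, 1] are both the Lebesgue-Stieltjes measure
   of the uniform distribution function, so E[g(U)] = \int_0^1 g.  Hence the
   B_j(U), j >= 1, are centred with unit variance and
   E[B_j(U) B_k(U)] = delta_jk, so the basis correlation of (X, Y) is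
   E[B_j(U) B_k(V)] with V := F_Y(Y).
   If (X, Y) is comonotonic then U = V almost surely: for every u the events
   {U <= u < V} and {V <= u < U} have the same probability, and two points of a
   comonotonic support cannot lie one in each, so both events are null, and
   {U <> V} is their union over rational u.  In the
   countermonotonic case the events {U <= u, V <= 1 - u} and {U > u, V > 1 - u}
   play this role and give V = 1 - U almost surely, whence
   B_k(V) = (-1)^k B_k(U) by the symmetry of a natural basis. *)

Section clamp01.
Variable R : realType.
Local Notation leb := (@lebesgue_measure R).

(* The distribution function of the uniform law on [0, 1]. *)
Definition clamp01 (x : R) : R := minr (maxr x 0) 1.

Lemma clamp01_cases x :
  [\/ x <= 0 /\ clamp01 x = 0, 0 <= x <= 1 /\ clamp01 x = x
    | 1 <= x /\ clamp01 x = 1].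
Proof.
rewrite /clamp01 maxEle; case: (leP x 0) => x0; rewrite minEle.
  by apply: Or31; rewrite ler01.
case: leP => x1; last by apply: Or33; rewrite ltW.
by apply: Or32; split => //; apply/andP; split => //; exact: ltW.
Qed.

Lemma clamp01_sym x : clamp01 x + clamp01 (1 - x) = 1.
Proof.
by case: (clamp01_cases x) => -[? ->];
  case: (clamp01_cases (1 - x)) => -[? ->]; lra.
Qed.

Lemma clamp01_nondecreasing : {homo clamp01 : x y / x <= y}.
Proof.
move=> x y xy; case: (clamp01_cases x) => -[? ->];
  by case: (clamp01_cases y) => -[? ->]; lra.
Qed.

Lemma clamp01_continuous : continuous clamp01.
Proof.
move=> x; have cmin := @continuous_min R R (fun x => maxr x 0) (cst 1) x.
have cmax := @continuous_max R R id (cst 0) x.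
apply: cmin; last exact: cvg_cst.
by apply: cmax; [exact: cvg_id | exact: cvg_cst].
Qed.

Lemma clamp01_right_continuous : right_continuous clamp01.
Proof. by move=> x; apply: cvg_at_right_filter; exact: clamp01_continuous. Qed.

HB.instance Definition _ := isCumulative.Build R _ R clamp01
  clamp01_nondecreasing clamp01_right_continuous.

Lemma lebesgue_measure_itvoc_cap01 (a b : R) : a < b ->
  leb (`]a, b] `&` `]0, 1]) = (clamp01 b - clamp01 a)%:E.
Proof.
move=> ab; have [lt_ab'|le_ba'] := ltP (maxr a 0) (minr b 1).
- have -> : `]a, b] `&` `]0, 1] = `](maxr a 0), (minr b 1)]%classic.
    apply/seteqP; split => x /=; rewrite !in_itv/= gt_max le_min.
      by move=> [/andP[-> ->] /andP[-> ->]].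
    by move=> /andP[/andP[-> ->] /andP[-> ->]].
  rewrite lebesgue_measure_itv/= lte_fin lt_ab' -EFinB; congr (_%:E).
  move: lt_ab'; rewrite maxEle minEle.
  by case: (clamp01_cases a) => -[? ->]; case: (clamp01_cases b) => -[? ->];
    case: (leP a 0); case: (leP b 1); lra.
- have -> : `]a, b] `&` `]0, 1] = set0.
    apply/seteqP; split => x //= [/[!in_itv]/= /andP[ax xb] /andP[x0 x1]].
    move: le_ba'; rewrite maxEle minEle.
    by case: (leP a 0); case: (leP b 1); lra.
  rewrite measure0; congr (_%:E); move: le_ba'; rewrite maxEle minEle.
  by case: (clamp01_cases a) => -[? ->]; case: (clamp01_cases b) => -[? ->];
    case: (leP a 0); case: (leP b 1); lra.
Qed.

Lemma lebesgue_stieltjes_clamp01 (A : set (measurableTypeR R)) : measurable A ->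
  lebesgue_stieltjes_measure clamp01 A = leb (A `&` `]0, 1]).
Proof.
have m01 : measurable (`]0, 1] : set R) by exact: measurable_itv.
move=> mA; rewrite (@lebesgue_stieltjes_measure_unique _ _ (mrestr leb m01)) //.
move=> _ [[a b] _ <-]; rewrite /lebesgue_stieltjes_measure /measure_extension/=.
rewrite measurable_mu_extE/=; last exact: is_ocitv.
rewrite /mrestr; have [ab|ba] := ltP a b.
  by rewrite wlength_itv_bnd ?ltW// lebesgue_measure_itvoc_cap01.
by rewrite set_itv_ge ?wlength0 ?set0I ?measure0// bnd_simp -leNgt.
Qed.

Lemma lebesgue_measure_sub01 (A : set R) : measurable A -> A `<=` `[0, 1] ->
  leb A = leb (A `&` `]0, 1]).
Proof.
move=> mA A01; have mI : measurable (A `&` `]0, 1]) by exact: measurableI.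
apply/eqP; rewrite eq_le [X in _ && X]le_measure ?inE ?andbT//=.
have AI0 : A `<=` (A `&` `]0, 1]) `|` [set 0].
  move=> x Ax; have /= /[!in_itv]/= /andP[x0 x1] := A01 _ Ax.
  have [->|x_neq0] := eqVneq x 0; first by right.
  by left; split => //=; rewrite lt_neqAle eq_sym x_neq0 x0 x1.
have mAI0 : measurable ((A `&` `]0, 1]) `|` [set 0]) by exact: measurableU.
apply: (@le_trans _ _ (leb ((A `&` `]0, 1]) `|` [set 0]))).
  by apply: le_measure; rewrite ?inE.
apply: (le_trans (measureU2 _ _ _)) => //.
by rewrite [X in (_ + X)%E]lebesgue_measure_set1 adde0.
Qed.

End clamp01.

Section probability_sets.
Context {R : realType} {d : measure_display} {T : measurableType d}.
Variable P : probability T R.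

Lemma probability_lty (A : set T) : measurable A -> (P A < +oo)%E.
Proof. by move=> mA; rewrite -ge0_fin_numE// fin_num_measure. Qed.

Lemma measureD_swap (A B : set T) : measurable A -> measurable B ->
  P A = P B -> P (A `\` B) = P (B `\` A).
Proof.
move=> mA mB AB.
by rewrite !measureD ?probability_lty// setIC; congr (_ - _)%E.
Qed.

Lemma probability_setCI (A B : set T) : measurable A -> measurable B ->
  (P A + P B = 1)%E -> P (~` A `&` ~` B) = P (A `&` B).
Proof.
move=> mA mB AB1; rewrite -setCU probability_setC; last exact: measurableU.
rewrite measureUfinl ?probability_lty//.
transitivity (1 - (1 - P (A `&` B)))%E; first by congr (_ - (_ - _))%E.
rewrite -[P (A `&` B)]fineK ?fin_num_measure//; last exact: measurableI.
by rewrite -!EFinB subKr.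
Qed.

End probability_sets.

Section probability_integral_transform.
Context {R : realType} {d : measure_display} {T : measurableType d}.
Variables (P : probability T R) (X : {RV P >-> R}).
Local Notation F := (F_ X).
Local Notation leb := (@lebesgue_measure R).

Lemma cdf_F x : cdf X x = (F x)%:E.
Proof. by rewrite /F_ fineK// fin_num_measure. Qed.

Lemma F_nondecreasing : {homo F : x y / x <= y}.
Proof.
by move=> x y xy; rewrite /F_ fine_le ?fin_num_measure// cdf_nondecreasing.
Qed.

Lemma F_ge0 x : 0 <= F x.
Proof. exact: fine_ge0. Qed.

Lemma F_le1 x : F x <= 1.
Proof. by rewrite -lee_fin -cdf_F cdf_le1. Qed.

Lemma F_in01 x : F x \in `[0, 1].
Proof. by rewrite in_itv/= F_ge0 F_le1. Qed.

Lemma F_ltNy u : 0 < u -> exists x, F x < u.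
Proof.
move=> u0; have [M [_ HM]] := cvgr_lt _ (fine_cvg (cvg_cdfNy0 X)) _ u0.
by exists (M - 1); apply: HM; rewrite ltrBlDr ltrDl.
Qed.

Lemma F_gty u : u < 1 -> exists M, forall x, M < x -> u < F x.
Proof.
move=> u1; have [M [_ HM]] := cvgr_gt _ (fine_cvg (cvg_cdfy1 X)) _ u1.
by exists M.
Qed.

(* Valued in [measurableTypeR R], where Lebesgue-Stieltjes measures live, so
   that its law can be identified with one of them. *)
Definition pit : T -> measurableTypeR R := fun w => F (X w).

Lemma measurable_pit : measurable_fun setT pit.
Proof.
apply: measurableT_comp => //.
exact: measurable_realfun.nondecreasing_measurable F_nondecreasing.
Qed.

HB.instance Definition _ := isMeasurableFun.Build _ _ _ _ pit measurable_pit.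

Lemma measurable_F_le u : measurable [set w | F (X w) <= u].
Proof.
rewrite -[X in measurable X]setTI.
exact: measurable_pit (measurable_itv `]-oo, u]).
Qed.

Hypothesis cX : continuous F.

Lemma F_sublevel u : 0 <= u < 1 -> [set x | F x <= u] !=set0 ->
  exists s, F s = u /\ [set x | F x <= u] = `]-oo, s]%classic.
Proof.
move=> /andP[u0 u1] Sne; set S := [set x | F x <= u].
have [M HM] := F_gty u1.
have ubS : has_ubound S.
  by exists M => x /= Fxu; rewrite leNgt; apply/negP => /HM; rewrite ltNge Fxu.
have supS : has_sup S by [].
set s := sup S.
have Fs_le : F s <= u.
  rewrite leNgt; apply/negP => uFs.
  have [e e0 he] := (nbhs_ballP _ _).1 (cvgr_gt _ (@cX s) _ uFs).
  have [x Sx sx] := sup_adherent e0 supS.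
  suff : u < F x by rewrite ltNge Sx.
  apply: he; rewrite -ball_normE /ball_/= ger0_norm ?subr_ge0 ?ub_le_sup//.
  by rewrite ltrBlDr addrC -ltrBlDr.
have Fs_ge : u <= F s.
  rewrite leNgt; apply/negP => Fsu.
  have [e e0 he] := (nbhs_ballP _ _).1 (cvgr_lt _ (@cX s) _ Fsu).
  have /(ub_le_sup ubS) : S (s + e / 2).
    apply/ltW/he; rewrite -ball_normE /ball_/= opprD addrA subrr sub0r normrN.
    by rewrite gtr0_norm ?divr_gt0// ltr_pdivrMr// ltr_pMr// ltr1n.
  by rewrite gerDl leNgt divr_gt0.
exists s; split; first by apply/eqP; rewrite eq_le Fs_le Fs_ge.
apply/seteqP; split => x /=; rewrite in_itv/=; first exact: ub_le_sup.
by move=> /F_nondecreasing /le_trans; apply.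
Qed.

Lemma probability_F_le u : P [set w | F (X w) <= u] = (clamp01 u)%:E.
Proof.
have [u0|u0] := ltP u 0.
  have -> : [set w | F (X w) <= u] = set0.
    by apply/seteqP; split => // w /= Fu; have := F_ge0 (X w); lra.
  rewrite measure0; congr (_%:E).
  by case: (clamp01_cases u) => -[? ->] //; lra.
have [u1|u1] := ltP u 1; last first.
  have -> : [set w | F (X w) <= u] = setT.
    by apply/seteqP; split => // w _ /=; rewrite (le_trans (F_le1 _)).
  rewrite probability_setT; congr (_%:E).
  by case: (clamp01_cases u) => -[? ->] //; lra.
have -> : clamp01 u = u by case: (clamp01_cases u) => -[? ->] //; lra.
have [Sne|S0] := pselect ([set x | F x <= u] !=set0); last first.
  have -> : [set w | F (X w) <= u] = set0.
    by apply/seteqP; split => // w /= Fu; apply: S0; exists (X w).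
  suff -> : u = 0 by rewrite measure0.
  apply/eqP; rewrite eq_le u0 andbT leNgt; apply/negP => /F_ltNy[x Fx].
  by apply: S0; exists x; rewrite /= ltW.
have u01 : 0 <= u < 1 by rewrite u0 u1.
have [s [<- Sitv]] := F_sublevel u01 Sne.
have -> : [set w | F (X w) <= F s] = X @^-1` `]-oo, s] by rewrite -Sitv.
by rewrite -cdf_F.
Qed.

Lemma lebesgue_stieltjes_clamp01_pit (A : set (measurableTypeR R)) :
  measurable A ->
  lebesgue_stieltjes_measure (@clamp01 R) A = distribution P pit A.
Proof.
move=> mA.
rewrite (@lebesgue_stieltjes_measure_unique _ _ (distribution P pit)) //.
move=> _ [[a b] _ <-]; rewrite /lebesgue_stieltjes_measure /measure_extension/=.
rewrite measurable_mu_extE/=; last exact: is_ocitv.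
have [ab|ba] := ltP a b; last first.
  by rewrite set_itv_ge ?wlength0 ?measure0// bnd_simp -leNgt.
rewrite wlength_itv_bnd ?ltW// /distribution /pushforward.
have -> : pit @^-1` `]a, b] = [set w | F (X w) <= b] `\` [set w | F (X w) <= a].
  apply/seteqP; split => w /=; rewrite /pit in_itv/=.
    by move=> /andP[aw wb]; split => //; rewrite leNgt aw.
  by move=> [wb /negP]; rewrite -ltNge => ->.
have mFb := measurable_F_le b; have mFa := measurable_F_le a.
rewrite measureD ?probability_lty//.
rewrite setIidr; last by move=> w /= wa; rewrite (le_trans wa)// ltW.
by rewrite EFinB; congr (_ - _)%E; apply/esym; exact: probability_F_le.
Qed.

Lemma distribution_pit (A : set R) : measurable A -> A `<=` `[0, 1] ->
  distribution P pit A = leb A.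
Proof.
move=> mA A01.
rewrite lebesgue_measure_sub01// -lebesgue_stieltjes_clamp01//.
by rewrite lebesgue_stieltjes_clamp01_pit.
Qed.

Lemma expectation_F_comp (g : R -> R) (M : R) :
    measurable_fun (`[0, 1] : set R) g ->
    (forall x, x \in `[0, 1] -> `|g x| <= M) ->
  ('E_P[fun w => g (F (X w))] = \int[leb]_(x in `[0%R, 1%R]) (g x)%:E)%E.
Proof.
move=> mg gM; have m01 : measurable (`[0, 1] : set R) by exact: measurable_itv.
pose g' := g \_ `[0, 1].
have mg' : measurable_fun setT g' by exact/(measurable_restrictT _ m01).
have g'E x : x \in `[0, 1] -> g' x = g x.
  by move=> x01; rewrite /g' patchE mem_set// -(@in_setE R).
have pit01 : pit @^-1` `[0, 1] = setT.
  by apply/seteqP; split => // w _ /=; have := F_in01 (X w); rewrite inE.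
have -> : ('E_P[fun w => g (F (X w))] =
    \int[P]_(w in pit @^-1` `[0%R, 1%R]) ((EFin \o g') \o pit) w)%E.
  by rewrite pit01 unlock; apply: eq_integral => w _ /=; rewrite g'E ?F_in01.
rewrite -integral_pushforward//; first last.
- rewrite pit01; apply: measurable_bounded_integrable => //.
  + exact: probability_lty.
  + exact: measurableT_comp measurable_pit.
  + exists M; split; first exact: num_real.
    move=> z Mz w _ /=; rewrite g'E ?F_in01//.
    by rewrite (le_trans (gM _ (F_in01 _)))// ltW.
- exact/measurable_realfun.measurable_EFinP.
rewrite (@eq_measure_integral _ _ _ _ leb); last first.
  by move=> A mA A01; exact: distribution_pit.
by apply: eq_integral => x; rewrite inE /= => x01; rewrite g'E.
Qed.

End probability_integral_transform.

Section negligible.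
Context {d : measure_display} {T : measurableType d} {R : realType}.
Variable mu : {measure set T -> \bar R}.

Lemma negligible_lt_rat (f g : T -> R) :
    (forall q : rat, mu.-negligible [set w | f w < ratr q < g w]) ->
  mu.-negligible [set w | f w < g w].
Proof.
move=> fqg; pose q_ n : rat := odflt 0 (unpickle n).
apply: negligibleS (negligible_bigcup (fun n => fqg (q_ n))) => w /= fg.
have [q /[!in_itv]/= fqg'] := rat_in_itvoo fg.
by exists (pickle q) => //; rewrite /q_ pickleK.
Qed.

Lemma negligible_neq_rat (f g : T -> R) :
    (forall q : rat, mu.-negligible [set w | f w < ratr q < g w] /\
                     mu.-negligible [set w | g w < ratr q < f w]) ->
  mu.-negligible [set w | f w <> g w].
Proof.
move=> fqg; have lt_fg := negligible_lt_rat (fun q => (fqg q).1).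
have lt_gf := negligible_lt_rat (fun q => (fqg q).2).
apply: negligibleS (negligibleU lt_fg lt_gf) => w /= /eqP.
by rewrite neq_lt => /orP[]; [left|right].
Qed.

Lemma negligible_exclusive (G E1 E2 : set T) :
    mu.-negligible (~` G) -> measurable E1 -> measurable E2 -> mu E1 = mu E2 ->
    (forall w1 w2, G w1 -> G w2 -> E1 w1 -> E2 w2 -> False) ->
  mu.-negligible E1 /\ mu.-negligible E2.
Proof.
move=> NG mE1 mE2 E12 excl.
have [E1G|E1G] := pselect (E1 `<=` ~` G).
  have N1 := negligibleS E1G NG; split => //.
  by apply/negligibleP => //; apply: etrans (esym E12) _; exact/negligibleP.
have E2G : E2 `<=` ~` G.
  move=> w2 E2w2 Gw2; apply: E1G => w1 E1w1 Gw1; exact: excl Gw1 Gw2 E1w1 E2w2.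
have N2 := negligibleS E2G NG; split => //.
by apply/negligibleP => //; apply: etrans E12 _; exact/negligibleP.
Qed.

End negligible.

Section monotone_coupling.
Context {R : realType} {d : measure_display} {T : measurableType d}.
Variables (P : probability T R) (X Y : {RV P >-> R}).
Hypotheses (cX : continuous (F_ X)) (cY : continuous (F_ Y)).
Local Notation U w := (F_ X (X w)).
Local Notation V w := (F_ Y (Y w)).

Lemma comonotonic_F_ae_eq : comonotonic X Y ->
  P.-negligible [set w | U w <> V w].
Proof.
case=> A [coA AXY]; apply: negligible_neq_rat => q; set u : R := ratr q.
pose Lu := [set w | U w <= u]; pose Lv := [set w | V w <= u].
have [N1 N2] : P.-negligible (Lu `\` Lv) /\ P.-negligible (Lv `\` Lu).
  have mU : measurable Lu := measurable_F_le X u.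
  have mV : measurable Lv := measurable_F_le Y u.
  apply: negligible_exclusive AXY _ _ _ _.
  - exact: measurableD.
  - exact: measurableD.
  - by apply: measureD_swap => //; rewrite /Lu /Lv !probability_F_le.
  rewrite /Lu /Lv => w1 w2 Aw1 Aw2 [/= U1 V1] [/= V2 U2].
  case: (coA _ _ Aw1 Aw2) => /= -[x12 y12].
    by apply: V1; rewrite (le_trans (F_nondecreasing _ y12)).
  by apply: U2; rewrite (le_trans (F_nondecreasing _ x12)).
rewrite /Lu /Lv in N1 N2; split.
  by apply: negligibleS N1 => w /= /andP[? ?]; split => /=; lra.
by apply: negligibleS N2 => w /= /andP[? ?]; split => /=; lra.
Qed.

Lemma countermonotonic_F_ae_eq : countermonotonic X Y ->
  P.-negligible [set w | U w <> 1 - V w].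
Proof.
case=> A [coA AXY]; apply: negligible_neq_rat => q; set u : R := ratr q.
pose Lu := [set w | U w <= u]; pose Lv := [set w | V w <= 1 - u].
have [N1 N2] : P.-negligible (Lu `&` Lv) /\ P.-negligible (~` Lu `&` ~` Lv).
  have mU : measurable Lu := measurable_F_le X u.
  have mV : measurable Lv := measurable_F_le Y (1 - u).
  apply: negligible_exclusive AXY _ _ _ _.
  - exact: measurableI.
  - by apply: measurableI; exact: measurableC.
  - apply/esym/probability_setCI => //.
    by rewrite /Lu /Lv !probability_F_le// -EFinD clamp01_sym.
  rewrite /Lu /Lv => w1 w2 Aw1 Aw2 [/= U1 V1] [/= U2 V2].
  case: (coA _ _ Aw1 Aw2) => /= -[x12 y21].
    by apply: V2; rewrite (le_trans (F_nondecreasing _ y21)).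
  by apply: U2; rewrite (le_trans (F_nondecreasing _ x12)).
rewrite /Lu /Lv in N1 N2; split.
  by apply: negligibleS N1 => w /= /andP[? ?]; split => /=; lra.
by apply: negligibleS N2 => w /= /andP[? ?]; split => /=; lra.
Qed.

End monotone_coupling.

Lemma bounded_within01 {R : realType} (f : R -> R) :
    {within `[0, 1], continuous f} ->
  exists M, forall x, x \in `[0, 1] -> `|f x| <= M.
Proof.
move=> cf.
have := compact_bounded (continuous_compact cf (@segment_compact _ 0 1)).
move=> [M [_ HM]]; exists (M + 1) => x x01.
by apply: (HM (M + 1)); [rewrite ltrDl | exists x => //; rewrite -inE].
Qed.

Section centered_moments.
Context {R : realType} {d : measure_display} {T : measurableType d}.
Variable P : probability T R.

Lemma covariance_centered (f g : T -> R) :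
    fine ('E_P[f])%E = 0 -> fine ('E_P[g])%E = 0 ->
  covariance P f g = ('E_P[fun w => (f w * g w)%R])%E.
Proof.
move=> Ef Eg; rewrite unlock Ef Eg; congr (expectation _ _).
by apply/funext => w; rewrite /GRing.mul/= !subr0.
Qed.

Lemma pearson_standardized (f g : T -> R) :
    fine ('E_P[f])%E = 0 -> fine ('E_P[g])%E = 0 ->
    fine ('V_P[f])%E = 1 -> fine ('V_P[g])%E = 1 ->
  pearson P f g = fine ('E_P[fun w => (f w * g w)%R])%E.
Proof.
move=> Ef Eg Vf Vg.
by rewrite /pearson Vf Vg mulr1 sqrtr1 divr1 covariance_centered.
Qed.

Lemma expectation_ae_eq (f g : T -> R) :
    measurable_fun setT f -> measurable_fun setT g ->
    P.-negligible [set w | f w <> g w] ->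
  ('E_P[f] = 'E_P[g])%E.
Proof.
move=> mf mg Nfg; rewrite unlock; apply: ae_eq_integral => //.
- exact/measurable_realfun.measurable_EFinP.
- exact/measurable_realfun.measurable_EFinP.
- by apply: negligibleS Nfg => w /= nfg fg; apply: nfg => _; rewrite fg.
Qed.

End centered_moments.

Section basis_moments.
Context {R : realType} {d : measure_display} {T : measurableType d}.
Variables (P : probability T R) (B : nat -> R -> R).
Hypothesis B_basis : correlation_basis B.
Hypothesis B_continuous :
  forall j, (0 < j)%N -> {within `[0, 1], continuous (B j)}.

Lemma basis_measurable j : measurable_fun (`[0, 1] : set R) (B j).
Proof. by case: B_basis => /(_ j) []. Qed.

Lemma basis_bounded j : exists M, forall x, x \in `[0, 1] -> `|B j x| <= M.
Proof.
case: j => [|j]; last exact/bounded_within01/B_continuous.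
have [_ [_ [_ B0]]] := B_basis; by exists 1 => x /B0 ->; rewrite normr1.
Qed.

Lemma inner01Zr j k c : inner01 (B j) (fun x => c * B k x) = c * (j == k)%:R.
Proof.
have [_ [orth _]] := B_basis; rewrite -orth /inner01.
have m01 : measurable (`[0, 1] : set (measurableTypeR R)).
  exact: measurable_itv.
have [Mj Bj_le] := basis_bounded j; have [Mk Bk_le] := basis_bounded k.
rewrite -RintegralZl//; first by apply: eq_Rintegral => x _; rewrite mulrCA.
apply: measurable_bounded_integrable => //.
- by rewrite [X in (X < _)%E]lebesgue_measure_itv/= lte01 -EFinB ltry.
- apply: measurable_realfun.measurable_funM; exact: basis_measurable.
- exists (Mj * Mk); split; first exact: num_real.
  move=> M MjkM x /= x01; rewrite normrM (le_trans _ (ltW MjkM))//.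
  by rewrite ler_pM ?Bj_le ?Bk_le.
Qed.

Section transformed.
Variable Z : {RV P >-> R}.
Hypothesis cZ : continuous (F_ Z).
Local Notation BZ j := (fun w => B j (F_ Z (Z w))).

Lemma measurable_basis_F j : measurable_fun setT (BZ j).
Proof.
have FZ01 : (fun w => F_ Z (Z w)) @` setT `<=` (`[0, 1] : set R).
  by move=> _ [w _ <-]; have := F_in01 Z (Z w); rewrite inE.
apply: measurable_comp (measurable_itv _) FZ01 (basis_measurable j) _.
exact: measurable_pit.
Qed.

Lemma expectation_basis_F_mulZr j k c :
  fine ('E_P[fun w => (B j (F_ Z (Z w)) * (c * B k (F_ Z (Z w))))%R])%E =
  c * (j == k)%:R.
Proof.
have [Mj Bj_le] := basis_bounded j; have [Mk Bk_le] := basis_bounded k.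
rewrite (@expectation_F_comp _ _ _ P Z cZ (fun x => B j x * (c * B k x))
  (Mj * (`|c| * Mk))); first by rewrite -inner01Zr.
- apply: measurable_realfun.measurable_funM (basis_measurable j) _.
  apply: measurable_realfun.measurable_funM (measurable_cst c) _.
  exact: basis_measurable.
- move=> x x01; rewrite !normrM ler_pM ?mulr_ge0 ?Bj_le//.
  by rewrite ler_pM ?Bk_le.
Qed.

Lemma expectation_basis_F j : (0 < j)%N -> fine ('E_P[BZ j])%E = 0.
Proof.
move=> j0; have [_ [_ [_ B0]]] := B_basis.
transitivity (1 * (j == 0)%:R : R); last by rewrite eqn0Ngt j0 mulr0.
rewrite -expectation_basis_F_mulZr.
congr (fine (expectation _ _)); apply/funext => w.
by rewrite mul1r B0 ?mulr1 ?F_in01.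
Qed.

Lemma variance_basis_F j : (0 < j)%N -> fine ('V_P[BZ j])%E = 1.
Proof.
move=> j0; rewrite /variance covariance_centered ?expectation_basis_F//.
transitivity (1 * (j == j)%:R : R); last by rewrite eqxx mul1r.
rewrite -expectation_basis_F_mulZr.
by congr (fine (expectation _ _)); apply/funext => w; rewrite mul1r.
Qed.

End transformed.

Lemma basis_corr_ae (X Y : {RV P >-> R}) j k c :
    continuous (F_ X) -> continuous (F_ Y) -> (0 < j)%N -> (0 < k)%N ->
    P.-negligible [set w | B k (F_ Y (Y w)) <> c * B k (F_ X (X w))] ->
  basis_corr B j k X Y = c * (j == k)%:R.
Proof.
move=> cX cY j0 k0 BYX.
rewrite /basis_corr pearson_standardized
  ?expectation_basis_F ?variance_basis_F//.
rewrite -(expectation_basis_F_mulZr cX); congr fine; apply: expectation_ae_eq.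
- apply: measurable_realfun.measurable_funM; exact: measurable_basis_F.
- apply: measurable_realfun.measurable_funM (measurable_basis_F _ j) _.
  apply: measurable_realfun.measurable_funM (measurable_cst c) _.
  exact: measurable_basis_F.
- by apply: negligibleS BYX => w /=; apply: contra_not => ->.
Qed.

End basis_moments.

Theorem proposition3 (R : realType) (B : nat -> R -> R)
  (d : measure_display) (T : measurableType d) (P : probability T R)
  (X Y : {RV P >-> R}) :
  natural_basis B -> continuous_rv X -> continuous_rv Y ->
  (comonotonic X Y ->
     forall j k : nat, (0 < j)%N -> (0 < k)%N ->
       basis_corr B j k X Y = (j == k)%:R) /\
  (countermonotonic X Y ->
     forall j k : nat, (0 < j)%N -> (0 < k)%N ->
       basis_corr B j k X Y = (-1) ^+ j * (j == k)%:R).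
Proof.
move=> [[B_basis B_regular] B_natural] cX cY.
have B_continuous j : (0 < j)%N -> {within `[0, 1], continuous (B j)}.
  by move=> j0; have [_ []] := B_regular j j0.
split=> [/(comonotonic_F_ae_eq cX cY) UV | /(countermonotonic_F_ae_eq cX cY) UV]
  j k j0 k0.
  rewrite -[RHS]mul1r; apply: basis_corr_ae => //.
  by apply: negligibleS UV => w /=; apply: contra_not => ->; rewrite mul1r.
have -> : (-1) ^+ j * (j == k)%:R = (-1) ^+ k * (j == k)%:R :> R.
  by case: eqVneq => [->|]; rewrite ?mulr0.
apply: basis_corr_ae => //.
apply: negligibleS UV => w /=; apply: contra_not => UV.
have [_ [_ B_sym]] := B_natural k k0.
have -> : F_ Y (Y w) = 1 - F_ X (X w) by rewrite UV subKr.
by rewrite B_sym ?F_in01.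
Qed.
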